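(* For every regular social purpose game $\Gamma$ and every level of cooperation $k\in\{2,\dots,n\}$, there exists at least one partial cooperative leadership equilibrium of $\Gamma$ at level $k$.
   Context: A social purpose game $\Gamma=\langle N,\overline{Q},H,(\alpha_i,h_i,g_i)_{i\in N}\rangle$ consists of a player set $N=\{1,\dots,n\}$ with $n\ge 2$, a number $\overline{Q}>0$ such that every player's strategy set is $S_i=[0,\overline{Q}]$, a function $H\colon\mathbb{R}\to\mathbb{R}$, and for each $i\in N$ a weight $\alpha_i>0$ and functions $h_i,g_i\colon[0,\overline{Q}]\to\mathbb{R}$, with players ordered so that $0<\alpha_1\le\dots\le\alpha_n$. The payoff of player $i$ at $x\in[0,\overline{Q}]^N$ is $\pi_i(x)=\alpha_i H\big(\sum_{j=1}^n h_j(x_j)\big)-g_i(x_i)$. $\Gamma$ is regular if: each $h_i$ is the identity; $H$ is continuously differentiable, increasing and concave; and each $g_i$ is continuously differentiable, increasing and convex. For a level of cooperation $k\in\{2,\dots,n\}$, let $C_k=\{n-k+1,\dots,n\}$ (cooperators) and $N_k=N\setminus C_k=\{1,\dots,n-k\}$ (non-cooperators); write profiles as $(x^{N_k},x^{C_k})$ with $x^{N_k}\in[0,\overline{Q}]^{N_k}$, $x^{C_k}\in[0,\overline{Q}]^{C_k}$. For fixed $x^{C_k}$, $\mathrm{NE}(x^{C_k})\subseteq[0,\overline{Q}]^{N_k}$ is the set of Nash equilibria of the game with player set $N_k$, strategy sets $[0,\overline{Q}]$ and payoffs $x^{N_k}\mapsto\pi_j(x^{N_k},x^{C_k})$, $j\in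 N_k$ (when $N_k=\emptyset$ this set consists of the empty profile). Define $\tilde\pi(x^{C_k})=\min_{x^{N_k}\in\mathrm{NE}(x^{C_k})}\sum_{i\in C_k}\pi_i(x^{N_k},x^{C_k})$. A partial cooperative leadership equilibrium (PCLE) at level $k$ is a profile $(x^{N_k}_*,x^{C_k}_* )$ such that $x^{C_k}_*$ maximizes $\tilde\pi$ over $[0,\overline{Q}]^{C_k}$ and $x^{N_k}_*\in\arg\min_{x^{N_k}\in\mathrm{NE}(x^{C_k}_* )}\sum_{i\in C_k}\pi_i(x^{N_k},x^{C_k}_* )$. *)

From Stdlib Require Import Reals Lra Lia.
Open Scope R_scope.

(* Players are indexed 0..n-1 (player i of the paper is index i-1).
   Profiles are functions nat -> R; only indices < n matter. *)

Fixpoint sumR (n : nat) (f : nat -> R) : R :=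
  match n with
  | O => 0
  | S m => sumR m f + f m
  end.

(* f has derivative l at x relative to [a,b] (one-sided at the endpoints) *)
Definition has_derivative_within (f : R -> R) (a b x l : R) : Prop :=
  forall eps, 0 < eps -> exists delta, 0 < delta /\
    forall y, a <= y <= b -> y <> x -> Rabs (y - x) < delta ->
      Rabs ((f y - f x) / (y - x) - l) < eps.

Definition continuous_within (f : R -> R) (a b x : R) : Prop :=
  forall eps, 0 < eps -> exists delta, 0 < delta /\
    forall y, a <= y <= b -> Rabs (y - x) < delta -> Rabs (f y - f x) < eps.

Definition C1_on (f : R -> R) (a b : R) : Prop :=
  exists df : R -> R,
    (forall x, a <= x <= b -> has_derivative_within f a b x (df x)) /\
    (forall x, a <= x <= b -> continuous_within df a b x).

Definition increasing_on (f : R -> R) (a b : R) : Prop :=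
  forall x y, a <= x <= b -> a <= y <= b -> x < y -> f x < f y.

Definition convex_on (f : R -> R) (a b : R) : Prop :=
  forall x y t, a <= x <= b -> a <= y <= b -> 0 <= t <= 1 ->
    f (t * x + (1 - t) * y) <= t * f x + (1 - t) * f y.

Definition C1 (f : R -> R) : Prop :=
  exists df : R -> R, (forall x, derivable_pt_lim f x (df x)) /\ continuity df.

Definition increasing (f : R -> R) : Prop := forall x y, x < y -> f x < f y.

Definition concave (f : R -> R) : Prop :=
  forall x y t, 0 <= t <= 1 -> t * f x + (1 - t) * f y <= f (t * x + (1 - t) * y).

Definition payoff (n : nat) (H : R -> R) (alpha : nat -> R)
  (h g : nat -> R -> R) (i : nat) (x : nat -> R) : R :=
  alpha i * H (sumR n (fun j => h j (x j))) - g i (x i).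

Definition regular (n : nat) (Qbar : R) (H : R -> R)
  (h g : nat -> R -> R) : Prop :=
  (forall i, (i < n)%nat -> forall t, 0 <= t <= Qbar -> h i t = t) /\
  C1 H /\ increasing H /\ concave H /\
  (forall i, (i < n)%nat ->
     C1_on (g i) 0 Qbar /\ increasing_on (g i) 0 Qbar /\ convex_on (g i) 0 Qbar).

(* At level k, non-cooperators N_k are indices i < n-k, cooperators C_k are
   indices n-k <= i < n.  The full profile (x^{N_k}, x^{C_k}): *)
Definition join (n k : nat) (xN xC : nat -> R) : nat -> R :=
  fun i => if Nat.ltb i (n - k) then xN i else xC i.

Definition feasN (n k : nat) (Qbar : R) (xN : nat -> R) : Prop :=
  forall i, (i < n - k)%nat -> 0 <= xN i <= Qbar.

Definition feasC (n k : nat) (Qbar : R) (xC : nat -> R) : Prop :=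
  forall i, (n - k <= i < n)%nat -> 0 <= xC i <= Qbar.

Definition update (x : nat -> R) (i : nat) (y : R) : nat -> R :=
  fun j => if Nat.eqb j i then y else x j.

Definition NE (n k : nat) (Qbar : R) (H : R -> R) (alpha : nat -> R)
  (h g : nat -> R -> R) (xC xN : nat -> R) : Prop :=
  feasN n k Qbar xN /\
  forall j, (j < n - k)%nat -> forall y, 0 <= y <= Qbar ->
    payoff n H alpha h g j (join n k (update xN j y) xC)
      <= payoff n H alpha h g j (join n k xN xC).

Definition coopSum (n k : nat) (H : R -> R) (alpha : nat -> R)
  (h g : nat -> R -> R) (xN xC : nat -> R) : R :=
  sumR n (fun i => if Nat.leb (n - k) i
                   then payoff n H alpha h g i (join n k xN xC) else 0).

(* xN attains min_{x^{N_k} in NE(xC)} of the cooperators' sum payoff,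
   i.e. coopSum xN xC = tilde-pi(xC) *)
Definition NE_argmin (n k : nat) (Qbar : R) (H : R -> R) (alpha : nat -> R)
  (h g : nat -> R -> R) (xC xN : nat -> R) : Prop :=
  NE n k Qbar H alpha h g xC xN /\
  forall xN', NE n k Qbar H alpha h g xC xN' ->
    coopSum n k H alpha h g xN xC <= coopSum n k H alpha h g xN' xC.

(* Partial cooperative leadership equilibrium at level k:
   x^{C_k}_* maximizes tilde-pi over [0,Qbar]^{C_k} (tilde-pi being the
   min over NE, required to be attained at every feasible x^{C_k}), and
   x^{N_k}_* is a minimizer in NE(x^{C_k}_* ). *)
Definition PCLE (n k : nat) (Qbar : R) (H : R -> R) (alpha : nat -> R)
  (h g : nat -> R -> R) (xN xC : nat -> R) : Prop :=
  feasC n k Qbar xC /\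
  NE_argmin n k Qbar H alpha h g xC xN /\
  forall xC', feasC n k Qbar xC' ->
    exists xN', NE_argmin n k Qbar H alpha h g xC' xN' /\
      coopSum n k H alpha h g xN' xC' <= coopSum n k H alpha h g xN xC.

(* Fix the cooperators' profile x^C.  Since every h_i is the identity, payoffs
   depend on the others only through the aggregate S = sum_i x_i, and the game
   among the non-cooperators has concave payoffs and a potential.  Its Nash
   equilibria are exactly the profiles satisfying the Kuhn-Tucker conditions
   [foc] at their own aggregate (NE_iff); a maximizer of the potential is one
   (NE_exists).  The equilibrium set is closed, so an equilibrium of minimal
   aggregate exists, and it is the worst one for the cooperators, whose joint
   payoff is A H(S) - G(x^C) (minimal_NE_argmin).  Monotone comparative
   statics of [foc] show that raising the cooperators' total by r >= 0 raises
   the minimal aggregate by at most r (minimal_aggregate_bound); hence the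
   leader value tilde-pi is upper semicontinuous and attains its maximum on
   the cooperators' box, which together with its minimal equilibrium is a PCLE. *)

From Stdlib Require Import Reals Lra Lia Classical ClassicalEpsilon IndefiniteDescription.
Open Scope R_scope.

(** * Finite sums *)

Lemma sumR_ext n f g : (forall i, (i < n)%nat -> f i = g i) -> sumR n f = sumR n g.
Proof.
  induction n as [|n IH]; intros Hfg; simpl; auto.
  rewrite IH by (intros; apply Hfg; lia). rewrite Hfg by lia. reflexivity.
Qed.

Lemma sumR_plus n f g : sumR n (fun i => f i + g i) = sumR n f + sumR n g.
Proof. induction n; simpl; [lra|]. rewrite IHn; lra. Qed.

Lemma sumR_minus n f g : sumR n (fun i => f i - g i) = sumR n f - sumR n g.
Proof. induction n; simpl; [lra|]. rewrite IHn; lra. Qed.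

Lemma sumR_scal n c f : sumR n (fun i => c * f i) = c * sumR n f.
Proof. induction n; simpl; [lra|]. rewrite IHn; lra. Qed.

Lemma sumR_le n f g : (forall i, (i < n)%nat -> f i <= g i) -> sumR n f <= sumR n g.
Proof.
  induction n as [|n IH]; intros Hfg; simpl; [lra|].
  assert (sumR n f <= sumR n g) by (apply IH; intros; apply Hfg; lia).
  assert (f n <= g n) by (apply Hfg; lia). lra.
Qed.

Lemma sumR_const n c : sumR n (fun _ => c) = INR n * c.
Proof. induction n as [|n IH]; simpl sumR; [simpl; lra|]. rewrite IH, S_INR. ring. Qed.

Lemma sumR_bound n f c : (forall i, (i < n)%nat -> f i <= c) -> sumR n f <= INR n * c.
Proof. intros Hf. rewrite <- sumR_const. apply sumR_le, Hf. Qed.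

Lemma sumR_ge0 n f : (forall i, (i < n)%nat -> 0 <= f i) -> 0 <= sumR n f.
Proof.
  intros Hf. replace 0 with (INR n * 0) by ring. rewrite <- sumR_const. apply sumR_le, Hf.
Qed.

Lemma sumR_update n x j y : (j < n)%nat ->
  sumR n (update x j y) = sumR n x - x j + y.
Proof.
  unfold update. induction n as [|n IH]; intros Hj; [lia|]. simpl.
  destruct (Nat.eqb_spec n j) as [->|Hne].
  - rewrite (sumR_ext j _ x); [lra|]. intros i Hi. destruct (Nat.eqb_spec i j); [lia|auto].
  - rewrite IH by lia. lra.
Qed.

Lemma sumR_trunc m d f :
  sumR (m + d) (fun i => if Nat.ltb i m then f i else 0) = sumR m f.
Proof.
  induction d as [|d IH].
  - rewrite Nat.add_0_r. apply sumR_ext. intros i Hi. destruct (Nat.ltb_spec i m); [auto|lia].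
  - rewrite Nat.add_succ_r. simpl. rewrite IH. destruct (Nat.ltb_spec (m + d) m); [lia|lra].
Qed.

Lemma sumR_abs_close n x y d : (forall i, (i < n)%nat -> Rabs (y i - x i) < d) ->
  Rabs (sumR n y - sumR n x) <= INR n * d.
Proof.
  induction n as [|n IH]; simpl sumR; intros Hxy.
  - rewrite Rminus_diag, Rabs_R0. simpl; lra.
  - rewrite S_INR.
    assert (Rabs (sumR n y - sumR n x) <= INR n * d) by (apply IH; intros; apply Hxy; lia).
    assert (Rabs (y n - x n) < d) by (apply Hxy; lia).
    replace (sumR n y + y n - (sumR n x + x n)) with ((sumR n y - sumR n x) + (y n - x n)) by ring.
    eapply Rle_trans; [apply Rabs_triang | lra].
Qed.
(** * Boxes of profiles and the maximum theorem *)

Definition box (a b : nat) (Q : R) (x : nat -> R) : Prop :=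
  forall i, (a <= i < b)%nat -> 0 <= x i <= Q.

Definition close (a b : nat) (d : R) (x y : nat -> R) : Prop :=
  forall i, (a <= i < b)%nat -> Rabs (y i - x i) < d.

Definition usc_on_box (a b : nat) (Q : R) (f : (nat -> R) -> R) : Prop :=
  forall x, box a b Q x -> forall eps, 0 < eps -> exists d, 0 < d /\
    forall y, box a b Q y -> close a b d x y -> f y <= f x + eps.

Lemma close_weaken a b d d' x y : d <= d' -> close a b d x y -> close a b d' x y.
Proof. intros Hd Hc i Hi. specialize (Hc i Hi). lra. Qed.

(* Dividing by n + 1 leaves room for n errors. *)
Lemma div_succ_bounds d n : 0 < d ->
  0 < d / (INR n + 1) <= d /\ INR n * (d / (INR n + 1)) < d.
Proof.
  intros Hd. pose proof (pos_INR n). repeat split.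
  - apply Rdiv_lt_0_compat; lra.
  - apply Rmult_le_reg_r with (INR n + 1); [lra|].
    unfold Rdiv. rewrite Rmult_assoc, Rinv_l by lra. nra.
  - apply Rmult_lt_reg_r with (INR n + 1); [lra|].
    replace (INR n * (d / (INR n + 1)) * (INR n + 1)) with (INR n * d) by (field; lra). nra.
Qed.

Lemma sumR_close n d x y : 0 < d -> close 0 n (d / (INR n + 1)) x y ->
  Rabs (sumR n y - sumR n x) < d.
Proof.
  intros Hd Hc. destruct (div_succ_bounds d n Hd) as [_ Hlt].
  eapply Rle_lt_trans; [apply sumR_abs_close|exact Hlt]. intros i Hi. apply Hc. lia.
Qed.

Lemma sumR_continuous a n Q (F : nat -> R -> R) x :
  (forall i, (a <= i < n)%nat -> continuous_within (F i) 0 Q (x i)) ->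
  forall eps, 0 < eps -> exists d, 0 < d /\ forall y, box a n Q y -> close a n d x y ->
    Rabs (sumR n (fun i => if Nat.leb a i then F i (y i) else 0)
          - sumR n (fun i => if Nat.leb a i then F i (x i) else 0)) < eps.
Proof.
  induction n as [|n IH]; intros HF eps Heps.
  - exists 1. split; [lra|]. intros. simpl. rewrite Rminus_diag, Rabs_R0. lra.
  - destruct (IH (fun i Hi => HF i ltac:(lia)) (eps / 2)) as [d1 [Hd1 H1]]; [lra|].
    assert (Hinit : forall d y, d <= d1 -> box a (S n) Q y -> close a (S n) d x y ->
      Rabs (sumR n (fun i => if Nat.leb a i then F i (y i) else 0)
            - sumR n (fun i => if Nat.leb a i then F i (x i) else 0)) < eps / 2).
    { intros d y Hd Hy Hc. apply H1; [intros i Hi; apply Hy; lia|].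
      intros i Hi. apply (close_weaken a (S n) d); auto; lia. }
    simpl sumR. destruct (Nat.leb_spec a n).
    + destruct (HF n ltac:(lia) (eps / 2)) as [d2 [Hd2 H2]]; [lra|].
      exists (Rmin d1 d2). split; [apply Rmin_glb_lt; lra|]. intros y Hy Hc.
      assert (Hlast : Rabs (F n (y n) - F n (x n)) < eps / 2).
      { apply H2; [apply Hy; lia|]. eapply Rlt_le_trans; [apply Hc; lia|apply Rmin_r]. }
      specialize (Hinit (Rmin d1 d2) y (Rmin_l _ _) Hy Hc).
      match goal with |- Rabs (?s1 + ?a1 - (?s2 + ?a2)) < _ =>
        replace (s1 + a1 - (s2 + a2)) with ((s1 - s2) + (a1 - a2)) by ring end.
      eapply Rle_lt_trans; [apply Rabs_triang|lra].
    + exists d1. split; [lra|]. intros y Hy Hc.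
      specialize (Hinit d1 y (Rle_refl _) Hy Hc).
      match goal with |- Rabs (?s1 + ?a1 - (?s2 + ?a2)) < _ =>
        replace (s1 + a1 - (s2 + a2)) with (s1 - s2) by ring end. lra.
Qed.

Definition strictly_increasing (phi : nat -> nat) : Prop := forall n, (phi n < phi (S n))%nat.

Definition converges (v : nat -> R) (l : R) : Prop :=
  forall eps, 0 < eps -> exists N, forall n, (N <= n)%nat -> Rabs (v n - l) < eps.

Lemma strictly_increasing_lt phi : strictly_increasing phi ->
  forall p q, (p < q)%nat -> (phi p < phi q)%nat.
Proof.
  intros Hphi p q Hpq. induction q as [|q IH]; [lia|].
  specialize (Hphi q). destruct (Nat.eq_dec p q) as [->|]; [lia|]. specialize (IH ltac:(lia)). lia.
Qed.

Lemma strictly_increasing_ge phi : strictly_increasing phi -> forall n, (n <= phi n)%nat.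
Proof. intros Hphi n. induction n; [lia|]. specialize (Hphi n). lia. Qed.

Lemma inv_succ_small eps : 0 < eps -> exists N, forall n, (N <= n)%nat -> / (INR n + 1) < eps.
Proof.
  intros He. destruct (archimed_cor1 eps He) as [N [HN HN0]]. exists N. intros n Hn.
  apply le_INR in Hn. assert (0 < INR N) by (apply lt_0_INR; auto).
  eapply Rlt_trans; [|apply HN]. apply Rinv_lt_contravar; nra.
Qed.

Lemma converges_in_interval v l a b : (forall n, a <= v n <= b) -> converges v l -> a <= l <= b.
Proof.
  intros Hv Hl. split; apply Rnot_lt_le; intro Hout.
  - destruct (Hl (a - l)) as [N HN]; [lra|].
    specialize (HN N (le_n _)). specialize (Hv N). apply Rabs_def2 in HN. lra.
  - destruct (Hl (l - b)) as [N HN]; [lra|].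
    specialize (HN N (le_n _)). specialize (Hv N). apply Rabs_def2 in HN. lra.
Qed.

(* diagonal c picks phi (S n) = c (S (phi n)) (S n): the index chosen at stage
   S n comes after phi n, with precision parameter S n *)
Fixpoint diagonal (c : nat -> nat -> nat) (n : nat) : nat :=
  match n with O => c O O | S n' => c (S (diagonal c n')) (S n') end.

Lemma bolzano_weierstrass_interval Q (u : nat -> R) : (forall n, 0 <= u n <= Q) ->
  exists phi l, strictly_increasing phi /\ 0 <= l <= Q /\ converges (fun n => u (phi n)) l.
Proof.
  intros Hu.
  destruct (Bolzano_Weierstrass u (fun c => 0 <= c <= Q) (compact_P3 0 Q) Hu) as [l Hl].
  (* l is a cluster value: arbitrarily late indices come 1/(e+1)-close to it *)
  assert (Hclust : forall Ne : nat * nat, exists p,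
            (fst Ne <= p)%nat /\ Rabs (u p - l) < / (INR (snd Ne) + 1)).
  { intros [N e].
    assert (Hpos : 0 < / (INR e + 1)) by (apply Rinv_0_lt_compat; pose proof (pos_INR e); lra).
    destruct (Hl (fun y => Rabs (y - l) < / (INR e + 1)) N) as [p Hp];
      [exists (mkposreal _ Hpos); intros y Hy; exact Hy|].
    exists p; exact Hp. }
  destruct (functional_choice _ Hclust) as [c Hc].
  set (phi := diagonal (fun N e => c (N, e))).
  assert (Hphi : strictly_increasing phi) by (intros n; apply (Hc (S (phi n), S n))).
  assert (Hconv : converges (fun n => u (phi n)) l).
  { intros eps He. destruct (inv_succ_small eps He) as [N HN]. exists N. intros n Hn.
    eapply Rlt_trans; [|apply HN; exact Hn].
    destruct n; [apply (Hc (O, O)) | apply (Hc (S (phi n), S n))]. }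
  exists phi, l. repeat split; auto; apply (converges_in_interval _ _ 0 Q (fun n => Hu (phi n)) Hconv).
Qed.

Lemma bolzano_weierstrass_box Q a b (xs : nat -> nat -> R) : (forall n, box a b Q (xs n)) ->
  exists phi l, strictly_increasing phi /\ box a b Q l /\
    forall eps, 0 < eps -> exists N, forall n, (N <= n)%nat -> close a b eps l (xs (phi n)).
Proof.
  revert xs. induction b as [|b IH]; intros xs Hxs.
  - exists (fun n => n), (fun _ => 0). split; [intros n; lia|]. split.
    + intros i Hi; lia.
    + intros. exists O. intros n _ i Hi. lia.
  - destruct (Nat.le_gt_cases a b) as [Hab|Hab].
    + destruct (IH xs) as [phi1 [l1 [Hp1 [Hl1 Hc1]]]]; [intros n i Hi; apply Hxs; lia|].
      destruct (bolzano_weierstrass_interval Q (fun n => xs (phi1 n) b)) as [phi2 [c [Hp2 [Hcq Hc2]]]];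
        [intros n; apply Hxs; lia|].
      exists (fun n => phi1 (phi2 n)), (update l1 b c). split; [|split].
      * intros n. apply strictly_increasing_lt; auto.
      * intros i Hi. unfold update. destruct (Nat.eqb_spec i b); auto. apply Hl1. lia.
      * intros eps He. destruct (Hc1 eps He) as [N1 HN1]. destruct (Hc2 eps He) as [N2 HN2].
        exists (Nat.max N1 N2). intros n Hn i Hi. unfold update.
        destruct (Nat.eqb_spec i b) as [->|].
        -- apply HN2. lia.
        -- apply HN1; [pose proof (strictly_increasing_ge phi2 Hp2 n); lia | lia].
    + exists (fun n => n), (fun _ => 0). split; [intros n; lia|]. split.
      * intros i Hi; lia.
      * intros. exists O. intros n _ i Hi. lia.
Qed.

Lemma usc_attains_max a b Q (f : (nat -> R) -> R) (B : R) : 0 <= Q ->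
  (forall x, box a b Q x -> f x <= B) -> usc_on_box a b Q f ->
  exists x, box a b Q x /\ forall y, box a b Q y -> f y <= f x.
Proof.
  intros HQ HB Husc.
  set (E := fun r => exists x, box a b Q x /\ r = f x).
  destruct (completeness E) as [M [HM1 HM2]].
  { exists B. intros r [x [Hx ->]]. apply HB; auto. }
  { exists (f (fun _ => 0)), (fun _ => 0). split; auto. intros i _. lra. }
  assert (Happ : forall n : nat, exists x, box a b Q x /\ M - / (INR n + 1) < f x).
  { intros n. apply NNPP. intro Hn.
    assert (0 < / (INR n + 1)) by (apply Rinv_0_lt_compat; pose proof (pos_INR n); lra).
    assert (M <= M - / (INR n + 1)); [|lra].
    apply HM2. intros r [x [Hx ->]]. apply Rnot_lt_le. intro Hlt. apply Hn. exists x. auto. }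
  destruct (functional_choice _ Happ) as [xs Hxs].
  destruct (bolzano_weierstrass_box Q a b xs) as [phi [l [Hp [Hl Hc]]]]; [apply Hxs|].
  exists l. split; auto.
  assert (HMl : M <= f l).
  { apply Rnot_lt_le. intro Hlt. set (e := (M - f l) / 3).
    destruct (Husc l Hl e) as [d [Hd Hd2]]; [unfold e; lra|].
    destruct (Hc d Hd) as [N1 HN1]. destruct (inv_succ_small e) as [N2 HN2]; [unfold e; lra|].
    set (p := phi (Nat.max N1 N2)).
    assert (f (xs p) <= f l + e) by (apply Hd2; [apply Hxs | apply HN1; lia]).
    assert (/ (INR p + 1) < e) by (apply HN2; pose proof (strictly_increasing_ge phi Hp (Nat.max N1 N2)); unfold p; lia).
    pose proof (proj2 (Hxs p)). unfold e in *. lra. }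
  intros y Hy. assert (f y <= M) by (apply HM1; exists y; auto). lra.
Qed.

(** * Calculus of one real variable on an interval *)

Lemma derivative_continuous f a b x d :
  has_derivative_within f a b x d -> continuous_within f a b x.
Proof.
  intros Hd eps He.
  destruct (Hd 1 ltac:(lra)) as [del [Hdel Hq]].
  set (r := eps / (Rabs d + 1)).
  assert (Hr : 0 < r) by (unfold r; apply Rdiv_lt_0_compat; pose proof (Rabs_pos d); lra).
  exists (Rmin del r). split; [apply Rmin_glb_lt; lra|].
  intros y Hy Hyx.
  destruct (Req_dec y x) as [->|Hne]; [rewrite Rminus_diag, Rabs_R0; lra|].
  specialize (Hq y Hy Hne (Rlt_le_trans _ _ _ Hyx (Rmin_l _ _))).
  pose proof (Rlt_le_trans _ _ _ Hyx (Rmin_r _ _)) as Hyr.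
  set (q := (f y - f x) / (y - x)) in *.
  replace (f y - f x) with (q * (y - x)) by (unfold q; field; lra).
  rewrite Rabs_mult.
  assert (Hqd : Rabs q <= Rabs d + 1).
  { replace q with ((q - d) + d) by ring. eapply Rle_trans; [apply Rabs_triang|lra]. }
  apply Rle_lt_trans with ((Rabs d + 1) * Rabs (y - x)).
  - apply Rmult_le_compat_r; [apply Rabs_pos|exact Hqd].
  - replace eps with ((Rabs d + 1) * r) by (unfold r; field; pose proof (Rabs_pos d); lra).
    apply Rmult_lt_compat_l; [pose proof (Rabs_pos d); lra|exact Hyr].
Qed.

Lemma derivable_pt_lim_within F x l a b : derivable_pt_lim F x l ->
  has_derivative_within F a b x l.
Proof.
  intros HF eps He. destruct (HF eps He) as [del Hdel]. exists del. split; [apply cond_pos|].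
  intros y _ Hne Hy. specialize (Hdel (y - x) ltac:(lra) Hy).
  replace (x + (y - x)) with y in Hdel by ring. exact Hdel.
Qed.

Lemma derivable_pt_lim_shift F c x l : derivable_pt_lim F (c + x) l ->
  derivable_pt_lim (fun y => F (c + y)) x l.
Proof.
  intros HF eps He. destruct (HF eps He) as [del Hdel]. exists del. intros h Hh Hhd.
  replace (c + (x + h)) with (c + x + h) by ring. apply Hdel; auto.
Qed.

Lemma continuity_pt_eps f x : continuity_pt f x ->
  forall eps, 0 < eps -> exists del, 0 < del /\
    forall y, Rabs (y - x) < del -> Rabs (f y - f x) < eps.
Proof.
  intros Hf eps He. destruct (Hf eps He) as [del [Hd Hdel]]. exists del. split; auto.
  intros y Hy. destruct (Req_dec y x) as [->|Hne]; [rewrite Rminus_diag, Rabs_R0; lra|].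
  apply (Hdel y). repeat split; auto.
Qed.

Lemma continuous_within_scale f c a b x : continuous_within f a b x ->
  continuous_within (fun y => c * f y) a b x.
Proof.
  intros Hf eps He. assert (Hc : 0 <= Rabs c) by apply Rabs_pos.
  destruct (Hf (eps / (Rabs c + 1))) as [d [Hd Hfd]]; [apply Rdiv_lt_0_compat; lra|].
  exists d. split; auto. intros y Hy Hyx.
  rewrite <- Rmult_minus_distr_l, Rabs_mult.
  apply Rle_lt_trans with (Rabs c * (eps / (Rabs c + 1))).
  - apply Rmult_le_compat_l; [lra|]. left. apply Hfd; auto.
  - apply Rmult_lt_reg_r with (Rabs c + 1); [lra|].
    replace (Rabs c * (eps / (Rabs c + 1)) * (Rabs c + 1)) with (Rabs c * eps) by (field; lra).
    nra.
Qed.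

Lemma derivative_comb F G a b x dF dG c :
  has_derivative_within F a b x dF -> has_derivative_within G a b x dG ->
  has_derivative_within (fun y => c * F y - G y) a b x (c * dF - dG).
Proof.
  intros HF HG eps He.
  set (e1 := eps / (2 * (Rabs c + 1))).
  assert (Hc : 0 <= Rabs c) by apply Rabs_pos.
  destruct (HF e1) as [d1 [Hd1 H1]]; [unfold e1; apply Rdiv_lt_0_compat; lra|].
  destruct (HG (eps / 2)) as [d2 [Hd2 H2]]; [lra|].
  exists (Rmin d1 d2). split; [apply Rmin_glb_lt; lra|]. intros y Hy Hne Hyx.
  specialize (H1 y Hy Hne (Rlt_le_trans _ _ _ Hyx (Rmin_l _ _))).
  specialize (H2 y Hy Hne (Rlt_le_trans _ _ _ Hyx (Rmin_r _ _))).
  replace ((c * F y - G y - (c * F x - G x)) / (y - x) - (c * dF - dG))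
    with (c * ((F y - F x) / (y - x) - dF) + - ((G y - G x) / (y - x) - dG))
    by (field; lra).
  eapply Rle_lt_trans; [apply Rabs_triang|]. rewrite Rabs_Ropp, Rabs_mult.
  assert (Rabs c * Rabs ((F y - F x) / (y - x) - dF) <= Rabs c * e1)
    by (apply Rmult_le_compat_l; lra).
  assert (Rabs c * e1 < eps / 2).
  { unfold e1. apply Rmult_lt_reg_r with (2 * (Rabs c + 1)); [lra|].
    replace (Rabs c * (eps / (2 * (Rabs c + 1))) * (2 * (Rabs c + 1))) with (Rabs c * eps)
      by (field; lra). nra. }
  lra.
Qed.

Lemma max_derivative_nonpos f a b x d : has_derivative_within f a b x d ->
  a <= x < b -> (forall y, a <= y <= b -> f y <= f x) -> d <= 0.
Proof.
  intros Hd Hx Hmax. apply Rnot_lt_le. intro Hpos.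
  destruct (Hd d Hpos) as [del [Hdel Hq]].
  set (y := x + Rmin del (b - x) / 2).
  assert (Hm : 0 < Rmin del (b - x)) by (apply Rmin_glb_lt; lra).
  assert (Hyb : y <= b) by (unfold y; pose proof (Rmin_r del (b - x)); lra).
  assert (Hyd : y - x < del) by (unfold y; pose proof (Rmin_l del (b - x)); lra).
  specialize (Hq y ltac:(unfold y in *; lra) ltac:(unfold y; lra)
                ltac:(rewrite Rabs_right by (unfold y; lra); exact Hyd)).
  apply Rabs_def2 in Hq. destruct Hq as [_ Hq].
  assert (0 < (f y - f x) / (y - x)) by lra.
  assert (0 < f y - f x).
  { replace (f y - f x) with ((f y - f x) / (y - x) * (y - x)) by (field; unfold y; lra).
    apply Rmult_lt_0_compat; unfold y in *; lra. }
  specialize (Hmax y ltac:(unfold y in *; lra)). lra.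
Qed.

Lemma max_derivative_nonneg f a b x d : has_derivative_within f a b x d ->
  a < x <= b -> (forall y, a <= y <= b -> f y <= f x) -> 0 <= d.
Proof.
  intros Hd Hx Hmax. apply Rnot_lt_le. intro Hneg.
  destruct (Hd (- d) ltac:(lra)) as [del [Hdel Hq]].
  set (y := x - Rmin del (x - a) / 2).
  assert (Hm : 0 < Rmin del (x - a)) by (apply Rmin_glb_lt; lra).
  assert (Hya : a <= y) by (unfold y; pose proof (Rmin_r del (x - a)); lra).
  assert (Hyd : x - y < del) by (unfold y; pose proof (Rmin_l del (x - a)); lra).
  specialize (Hq y ltac:(unfold y in *; lra) ltac:(unfold y; lra)
                ltac:(rewrite Rabs_left by (unfold y; lra); lra)).
  apply Rabs_def2 in Hq. destruct Hq as [Hq _].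
  assert ((f y - f x) / (y - x) < 0) by lra.
  assert (0 < f y - f x).
  { replace (f y - f x) with (- ((f y - f x) / (y - x)) * (x - y)) by (field; unfold y; lra).
    apply Rmult_lt_0_compat; unfold y in *; lra. }
  specialize (Hmax y ltac:(unfold y in *; lra)). lra.
Qed.

Lemma convex_above_tangent f a b x z d : convex_on f a b ->
  has_derivative_within f a b x d -> a <= x <= b -> a <= z <= b ->
  f x + d * (z - x) <= f z.
Proof.
  intros Hcv Hd Hx Hz.
  destruct (Req_dec z x) as [->|Hzx]; [lra|].
  apply Rnot_lt_le. intro Hlt.
  set (gam := f x + d * (z - x) - f z).
  assert (Hzx' : 0 < Rabs (z - x)) by (apply Rabs_pos_lt; lra).
  destruct (Hd (gam / Rabs (z - x))) as [del [Hdel Hq]];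
    [apply Rdiv_lt_0_compat; unfold gam; lra|].
  (* the point y = x + t (z - x), with t small enough to be del-close to x *)
  set (t := Rmin 1 (del / (2 * Rabs (z - x)))).
  assert (Ht : 0 < t <= 1).
  { split; [apply Rmin_glb_lt; [lra|apply Rdiv_lt_0_compat; lra]|apply Rmin_l]. }
  set (y := t * z + (1 - t) * x).
  assert (Hy : a <= y <= b) by (unfold y; split; nra).
  assert (Hyx : y - x = t * (z - x)) by (unfold y; ring).
  assert (Hyx0 : y <> x) by (intro E; assert (t * (z - x) = 0) by lra; nra).
  assert (Hyd : Rabs (y - x) < del).
  { rewrite Hyx, Rabs_mult, (Rabs_right t) by lra.
    assert (t * Rabs (z - x) <= del / (2 * Rabs (z - x)) * Rabs (z - x))
      by (apply Rmult_le_compat_r; [lra|apply Rmin_r]).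
    replace (del / (2 * Rabs (z - x)) * Rabs (z - x)) with (del / 2) in * by (field; lra). lra. }
  specialize (Hq y Hy Hyx0 Hyd).
  set (q := (f y - f x) / (y - x)) in *.
  (* convexity bounds the secant slope q from above by the chord slope ... *)
  assert (Hchord : q * (z - x) <= f z - f x).
  { assert (Hconv : f y <= t * f z + (1 - t) * f x) by (apply Hcv; auto; lra).
    assert (Hfy : f y - f x = t * (q * (z - x))) by (unfold q; rewrite Hyx; field; lra).
    apply Rmult_le_reg_l with t; [lra|]. nra. }
  (* ... while differentiability makes it close to d *)
  assert (Hclose : Rabs ((q - d) * (z - x)) < gam).
  { rewrite Rabs_mult.
    replace gam with (gam / Rabs (z - x) * Rabs (z - x)) by (field; lra).
    apply Rmult_lt_compat_r; auto. }
  apply Rabs_def2 in Hclose. unfold gam in *. lra.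
Qed.

Definition clamp (Q y : R) : R := Rmax 0 (Rmin Q y).

Lemma clamp_in Q y : 0 <= Q -> 0 <= clamp Q y <= Q.
Proof. intros. unfold clamp, Rmax, Rmin. repeat destruct Rle_dec; lra. Qed.

Lemma clamp_id Q y : 0 <= y <= Q -> clamp Q y = y.
Proof. intros. unfold clamp, Rmax, Rmin. repeat destruct Rle_dec; lra. Qed.

Lemma clamp_lipschitz Q y z : 0 <= Q -> Rabs (clamp Q y - clamp Q z) <= Rabs (y - z).
Proof.
  intros. unfold clamp, Rmax, Rmin. repeat destruct Rle_dec;
  unfold Rabs; repeat destruct Rcase_abs; lra.
Qed.

(* Intermediate value theorem on [0, Q], reduced to Stdlib's IVT by clamping. *)
Lemma IVT_within (f : R -> R) Q c : 0 < Q ->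
  (forall x, 0 <= x <= Q -> continuous_within f 0 Q x) ->
  f 0 < c -> c < f Q -> exists y, 0 <= y <= Q /\ f y = c.
Proof.
  intros HQ Hc H0 H1.
  set (F := fun y => f (clamp Q y) - c).
  assert (HF : continuity F).
  { intros x eps He. pose proof (clamp_in Q x ltac:(lra)) as Hcx.
    destruct (Hc (clamp Q x) Hcx eps He) as [d [Hd Hfd]].
    exists d. split; auto. intros y [_ Hy]. simpl in *. unfold Rdist in *. unfold F.
    replace (f (clamp Q y) - c - (f (clamp Q x) - c)) with (f (clamp Q y) - f (clamp Q x)) by ring.
    apply Hfd; [apply clamp_in; lra|].
    eapply Rle_lt_trans; [apply clamp_lipschitz; lra|exact Hy]. }
  destruct (IVT F 0 Q HF HQ) as [z [Hz Fz]].
  - unfold F. rewrite clamp_id by lra. lra.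
  - unfold F. rewrite clamp_id by lra. lra.
  - exists z. split; auto. unfold F in Fz. rewrite clamp_id in Fz by auto. lra.
Qed.

(** * The game at level k *)

Section Game.
Variables (n k : nat) (Q : R) (H : R -> R) (alpha : nat -> R) (h g : nat -> R -> R).
Variables (dH : R -> R) (dg : nat -> R -> R).
Hypothesis HQ : 0 < Q.
Hypothesis Hkn : (k <= n)%nat.
Hypothesis Halpha : forall i, (i < n)%nat -> 0 < alpha i.
Hypothesis Hh : forall i, (i < n)%nat -> forall t, 0 <= t <= Q -> h i t = t.
Hypothesis HHinc : increasing H.
Hypothesis HHconc : concave H.
Hypothesis HdH : forall x, derivable_pt_lim H x (dH x).
Hypothesis HdHc : continuity dH.
Hypothesis Hdg : forall i, (i < n)%nat -> forall x, 0 <= x <= Q ->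
  has_derivative_within (g i) 0 Q x (dg i x).
Hypothesis Hdgc : forall i, (i < n)%nat -> forall x, 0 <= x <= Q ->
  continuous_within (dg i) 0 Q x.
Hypothesis Hginc : forall i, (i < n)%nat -> increasing_on (g i) 0 Q.
Hypothesis Hgconv : forall i, (i < n)%nat -> convex_on (g i) 0 Q.

Let m := (n - k)%nat.

Lemma H_mono x y : x <= y -> H x <= H y.
Proof.
  intros Hxy. destruct (Req_dec x y) as [->|Hne]; [lra|]. left. apply HHinc. lra.
Qed.

Lemma H_continuous x : forall eps, 0 < eps -> exists del, 0 < del /\
  forall y, Rabs (y - x) < del -> Rabs (H y - H x) < eps.
Proof.
  apply continuity_pt_eps, derivable_continuous_pt. exists (dH x). apply HdH.
Qed.

Lemma H_below_tangent x z : H z <= H x + dH x * (z - x).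
Proof.
  assert (Hcv : convex_on (fun t => - H t) (Rmin x z) (Rmax x z)).
  { intros a b t _ _ Ht. specialize (HHconc a b t Ht). lra. }
  pose proof (convex_above_tangent _ _ _ x z (- dH x) Hcv
    (derivable_pt_lim_within _ _ _ _ _ (derivable_pt_lim_opp H x (dH x) (HdH x)))
    (conj (Rmin_l x z) (Rmax_l x z)) (conj (Rmin_r x z) (Rmax_r x z))).
  lra.
Qed.

Lemma dH_nonincreasing x y : x <= y -> dH y <= dH x.
Proof.
  intros Hxy. pose proof (H_below_tangent x y). pose proof (H_below_tangent y x).
  destruct (Req_dec x y) as [->|]; [lra|nra].
Qed.

Lemma g_above_tangent i x z : (i < n)%nat -> 0 <= x <= Q -> 0 <= z <= Q ->
  g i x + dg i x * (z - x) <= g i z.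
Proof. intros. apply (convex_above_tangent _ 0 Q); auto. Qed.

Lemma dg_nondecreasing i x y : (i < n)%nat -> 0 <= x <= Q -> 0 <= y <= Q -> x <= y ->
  dg i x <= dg i y.
Proof.
  intros Hi Hx Hy Hxy. pose proof (g_above_tangent i x y Hi Hx Hy).
  pose proof (g_above_tangent i y x Hi Hy Hx). destruct (Req_dec x y) as [->|]; [lra|nra].
Qed.

(* y satisfies the Kuhn-Tucker conditions for player j's best response to the
   aggregate S: marginal cost dg_j(y) and marginal benefit alpha_j dH(S) agree,
   up to the corner inequalities at 0 and Q. *)
Definition foc (j : nat) (S y : R) : Prop :=
  0 <= y <= Q /\ (0 < y -> dg j y <= alpha j * dH S) /\ (y < Q -> alpha j * dH S <= dg j y).

(* Comparative statics: a larger aggregate lowers the marginal benefit, so the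
   solutions for S and S' >= S form a lattice-ordered pair. *)
Lemma foc_lattice j S S' y y' : (j < n)%nat -> S <= S' -> foc j S y -> foc j S' y' ->
  foc j S' (Rmin y y') /\ foc j S (Rmax y y').
Proof.
  intros Hj HS [Hy1 [Hy2 Hy3]] [Hy1' [Hy2' Hy3']].
  pose proof (dH_nonincreasing S S' HS). pose proof (Halpha j Hj).
  assert (alpha j * dH S' <= alpha j * dH S) by nra.
  unfold Rmin, Rmax. destruct (Rle_dec y y').
  - destruct (Req_dec y y') as [<-|Hne].
    + split; repeat split; auto; lra.
    + assert (dg j y <= dg j y') by (apply dg_nondecreasing; auto; lra).
      assert (alpha j * dH S <= dg j y) by (apply Hy3; lra).
      assert (dg j y' <= alpha j * dH S') by (apply Hy2'; lra).
      split; repeat split; auto; intros; lra.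
  - split; repeat split; auto; lra.
Qed.

Lemma foc_interval j S y1 y2 y : (j < n)%nat -> foc j S y1 -> foc j S y2 -> y1 <= y <= y2 ->
  foc j S y.
Proof.
  intros Hj [A1 [A2 A3]] [B1 [B2 B3]] Hy. split; [lra|split]; intros Hpos.
  - destruct (Req_dec y y2) as [->|]; [apply B2; lra|].
    assert (dg j y <= dg j y2) by (apply dg_nondecreasing; auto; lra).
    assert (dg j y2 <= alpha j * dH S) by (apply B2; lra). lra.
  - destruct (Req_dec y y1) as [->|]; [apply A3; lra|].
    assert (dg j y1 <= dg j y) by (apply dg_nondecreasing; auto; lra).
    assert (alpha j * dH S <= dg j y1) by (apply A3; lra). lra.
Qed.

(* Solutions exist, by the intermediate value theorem for the continuous dg_j. *)
Lemma foc_exists j S : (j < n)%nat -> exists y, foc j S y.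
Proof.
  intros Hj. set (c := alpha j * dH S).
  destruct (Rle_or_lt c (dg j 0)).
  - exists 0. unfold foc; fold c. split; [lra|split]; intros; lra.
  - destruct (Rle_or_lt (dg j Q) c).
    + exists Q. unfold foc; fold c. split; [lra|split]; intros; lra.
    + destruct (IVT_within (dg j) Q c HQ (Hdgc j Hj)) as [y [Hy Hyc]]; auto.
      exists y. unfold foc; fold c. split; auto. split; intros; lra.
Qed.

Lemma foc_profile_exists S : exists p : nat -> R, forall j, (j < m)%nat -> foc j S (p j).
Proof.
  assert (Hd : forall d, (d <= m)%nat -> exists p : nat -> R, forall j, (j < d)%nat -> foc j S (p j)).
  { induction d as [|d IH]; intros Hd.
    - exists (fun _ => 0). intros; lia.
    - destruct (IH ltac:(lia)) as [p Hp].
      destruct (foc_exists d S ltac:(unfold m in *; lia)) as [y Hy].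
      exists (update p d y). intros j Hj. unfold update.
      destruct (Nat.eqb_spec j d) as [->|]; auto. apply Hp; lia. }
  apply Hd. lia.
Qed.

Lemma foc_profile_with_sum S1 S2 S3 (u v : nat -> R) tau :
  (forall j, (j < m)%nat -> foc j S1 (u j)) -> (forall j, (j < m)%nat -> foc j S3 (v j)) ->
  S1 <= S2 -> S2 <= S3 -> sumR m u <= tau -> tau <= sumR m v ->
  exists w, (forall j, (j < m)%nat -> foc j S2 (w j)) /\ sumR m w = tau.
Proof.
  intros Hu Hv H12 H23 Ht1 Ht2.
  destruct (foc_profile_exists S2) as [p Hp].
  set (L := fun j => Rmin (u j) (p j)). set (U := fun j => Rmax (p j) (v j)).
  assert (HL : forall j, (j < m)%nat -> foc j S2 (L j)).
  { intros j Hj. apply (foc_lattice j S1 S2); auto; unfold m in *; lia. }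
  assert (HU : forall j, (j < m)%nat -> foc j S2 (U j)).
  { intros j Hj. apply (foc_lattice j S2 S3); auto; unfold m in *; lia. }
  assert (HLU : forall j, L j <= U j).
  { intros j. unfold L, U. pose proof (Rmin_r (u j) (p j)). pose proof (Rmax_l (p j) (v j)). lra. }
  assert (sumR m L <= sumR m u) by (apply sumR_le; intros; apply Rmin_l).
  assert (sumR m v <= sumR m U) by (apply sumR_le; intros; apply Rmax_r).
  destruct (Req_dec (sumR m U) (sumR m L)) as [E|E].
  - exists L. split; auto. lra.
  - (* interpolate linearly between L and U *)
    set (th := (tau - sumR m L) / (sumR m U - sumR m L)).
    assert (Hth : 0 <= th <= 1).
    { unfold th. split.
      - apply Rmult_le_pos; [lra|]. apply Rlt_le, Rinv_0_lt_compat; lra.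
      - apply Rmult_le_reg_r with (sumR m U - sumR m L); [lra|].
        unfold Rdiv. rewrite Rmult_assoc, Rinv_l by lra. lra. }
    exists (fun j => L j + th * (U j - L j)). split.
    + intros j Hj. apply (foc_interval j S2 (L j) (U j)); auto; [unfold m in *; lia|].
      pose proof (HLU j). nra.
    + rewrite sumR_plus, sumR_scal, sumR_minus. unfold th. field. lra.
Qed.

Definition aggregate (xN xC : nat -> R) : R := sumR n (join n k xN xC).

Definition coop_total (xC : nat -> R) : R :=
  sumR n (fun i => if Nat.leb m i then xC i else 0).

Lemma aggregate_split xN xC : aggregate xN xC = sumR m xN + coop_total xC.
Proof.
  unfold aggregate, coop_total, join.
  rewrite (sumR_ext n _ (fun i => (if Nat.ltb i m then xN i else 0)
                                 + (if Nat.leb m i then xC i else 0))).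
  - rewrite sumR_plus. f_equal. replace n with (m + k)%nat at 1 by (unfold m; lia).
    apply sumR_trunc.
  - intros i Hi. fold m. destruct (Nat.ltb_spec i m); destruct (Nat.leb_spec m i); try lia; lra.
Qed.

Lemma join_feasible xN xC : feasN n k Q xN -> feasC n k Q xC ->
  forall i, (i < n)%nat -> 0 <= join n k xN xC i <= Q.
Proof.
  intros HN HC i Hi. unfold join. destruct (Nat.ltb_spec i (n - k)); [apply HN | apply HC]; lia.
Qed.

Lemma box_feasC x : box m n Q x <-> feasC n k Q x.
Proof. unfold box, feasC, m. split; intros Hb i Hi; apply Hb; lia. Qed.

(* Since every h_i is the identity on [0, Q], payoffs depend on the aggregate. *)
Lemma sum_h_aggregate xN xC : feasN n k Q xN -> feasC n k Q xC ->
  sumR n (fun j => h j (join n k xN xC j)) = aggregate xN xC.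
Proof.
  intros HN HC. apply sumR_ext. intros i Hi. apply Hh; auto. apply join_feasible; auto.
Qed.

Lemma feasN_update xN j y : feasN n k Q xN -> 0 <= y <= Q -> feasN n k Q (update xN j y).
Proof. intros HN Hy i Hi. unfold update. destruct (Nat.eqb_spec i j); auto. Qed.

Lemma payoff_noncoop xN xC j : feasN n k Q xN -> feasC n k Q xC -> (j < m)%nat ->
  payoff n H alpha h g j (join n k xN xC) = alpha j * H (aggregate xN xC) - g j (xN j).
Proof.
  intros HN HC Hj. unfold payoff. rewrite sum_h_aggregate by auto. unfold join.
  destruct (Nat.ltb_spec j (n - k)); [reflexivity|unfold m in *; lia].
Qed.

Lemma payoff_deviation xN xC j y : feasN n k Q xN -> feasC n k Q xC -> (j < m)%nat ->
  0 <= y <= Q -> payoff n H alpha h g j (join n k (update xN j y) xC)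
                 = alpha j * H (aggregate xN xC - xN j + y) - g j y.
Proof.
  intros HN HC Hj Hy. rewrite payoff_noncoop by auto using feasN_update.
  rewrite !aggregate_split, sumR_update by auto. unfold update. rewrite Nat.eqb_refl.
  do 3 f_equal. ring.
Qed.

(* Necessity: at an equilibrium, y |-> alpha_j H(S - x_j + y) - g_j(y) is
   maximal at x_j, so its derivative alpha_j dH(S) - dg_j(x_j) has the sign
   prescribed at an interior point or a corner. *)
Lemma NE_foc xC xN : feasC n k Q xC -> NE n k Q H alpha h g xC xN ->
  forall j, (j < m)%nat -> foc j (aggregate xN xC) (xN j).
Proof.
  intros HC [HN Hdev] j Hj.
  assert (Hjn : (j < n)%nat) by (unfold m in *; lia).
  set (S := aggregate xN xC). set (x := xN j).
  assert (Hx : 0 <= x <= Q) by (apply HN; auto).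
  set (phi := fun y => alpha j * H (S - x + y) - g j y).
  assert (Hmax : forall y, 0 <= y <= Q -> phi y <= phi x).
  { intros y Hy. specialize (Hdev j Hj y Hy).
    rewrite payoff_deviation, payoff_noncoop in Hdev by auto. unfold phi.
    replace (S - x + x) with S by ring. exact Hdev. }
  assert (Hder : has_derivative_within phi 0 Q x (alpha j * dH S - dg j x)).
  { apply derivative_comb; [|apply Hdg; auto].
    apply derivable_pt_lim_within, derivable_pt_lim_shift.
    replace (S - x + x) with S by ring. apply HdH. }
  split; [exact Hx|split]; intros Hcorner.
  - pose proof (max_derivative_nonneg phi 0 Q x _ Hder ltac:(lra) Hmax). lra.
  - pose proof (max_derivative_nonpos phi 0 Q x _ Hder ltac:(lra) Hmax). lra.
Qed.

(* Sufficiency: payoffs are concave in the own action, so by the tangent-line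
   inequalities for H and g_j the first-order conditions exclude profitable
   deviations. *)
Lemma foc_NE xC xN : feasC n k Q xC -> feasN n k Q xN ->
  (forall j, (j < m)%nat -> foc j (aggregate xN xC) (xN j)) -> NE n k Q H alpha h g xC xN.
Proof.
  intros HC HN Hfoc. split; auto. intros j Hj y Hy.
  assert (Hjn : (j < n)%nat) by (unfold m in *; lia).
  pose proof (Halpha j Hjn) as Haj.
  rewrite payoff_deviation, payoff_noncoop by auto.
  set (S := aggregate xN xC). set (x := xN j).
  destruct (Hfoc j Hj) as [Hx [Hb1 Hb2]]. fold S x in Hx, Hb1, Hb2.
  pose proof (H_below_tangent S (S - x + y)) as HtH.
  pose proof (g_above_tangent j x y Hjn Hx Hy) as Htg.
  replace (S - x + y - S) with (y - x) in HtH by ring.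
  assert ((alpha j * dH S - dg j x) * (y - x) <= 0).
  { destruct (Rtotal_order y x) as [Hl|[->|Hg]].
    - assert (dg j x <= alpha j * dH S) by (apply Hb1; lra). nra.
    - nra.
    - assert (alpha j * dH S <= dg j x) by (apply Hb2; lra). nra. }
  nra.
Qed.

Lemma NE_iff xC xN : feasC n k Q xC ->
  (NE n k Q H alpha h g xC xN <->
   feasN n k Q xN /\ forall j, (j < m)%nat -> foc j (aggregate xN xC) (xN j)).
Proof.
  intros HC. split.
  - intros HNE. split; [apply HNE|]. apply NE_foc; auto.
  - intros [HN Hfoc]. apply foc_NE; auto.
Qed.

(** Existence of equilibria: the game among the non-cooperators has a potential. *)

(* P(x) = H(sum_j x_j + T) - sum_j g_j(x_j)/alpha_j, with T the cooperators'
   total: a deviation of player j changes P by 1/alpha_j times the change of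
   j's payoff, so maximizers of P are equilibria. *)
Definition potential (xC x : nat -> R) : R :=
  H (sumR m x + coop_total xC) - sumR m (fun j => / alpha j * g j (x j)).

Lemma potential_bounded xC x : box 0 m Q x ->
  potential xC x <= H (INR m * Q + coop_total xC) - sumR m (fun j => / alpha j * g j 0).
Proof.
  intros Hx. unfold potential.
  assert (H (sumR m x + coop_total xC) <= H (INR m * Q + coop_total xC)).
  { apply H_mono. assert (sumR m x <= INR m * Q) by (apply sumR_bound; intros; apply Hx; lia).
    lra. }
  assert (sumR m (fun j => / alpha j * g j 0) <= sumR m (fun j => / alpha j * g j (x j))).
  { apply sumR_le. intros i Hi. assert (Hin : (i < n)%nat) by (unfold m in *; lia).
    apply Rmult_le_compat_l; [left; apply Rinv_0_lt_compat; auto|].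
    destruct (Hx i ltac:(lia)). destruct (Req_dec (x i) 0) as [->|]; [lra|].
    left. apply (Hginc i Hin); lra. }
  lra.
Qed.

Lemma potential_usc xC : usc_on_box 0 m Q (potential xC).
Proof.
  intros x Hx eps He.
  destruct (H_continuous (sumR m x + coop_total xC) (eps / 2)) as [d1 [Hd1 HH]]; [lra|].
  destruct (sumR_continuous 0 m Q (fun j t => / alpha j * g j t) x) with (eps := eps / 2)
    as [d2 [Hd2 Hg]]; [|lra|].
  { intros i Hi. apply continuous_within_scale, (derivative_continuous _ _ _ _ (dg i (x i))).
    apply Hdg; [unfold m in *; lia | apply Hx; lia]. }
  destruct (div_succ_bounds d1 m Hd1) as [[Hd3 _] _].
  exists (Rmin d2 (d1 / (INR m + 1))). split; [apply Rmin_glb_lt; auto|].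
  intros y Hy Hc. unfold potential.
  assert (A1 : Rabs (H (sumR m y + coop_total xC) - H (sumR m x + coop_total xC)) < eps / 2).
  { apply HH. replace (sumR m y + coop_total xC - (sumR m x + coop_total xC))
      with (sumR m y - sumR m x) by ring.
    apply sumR_close; auto. apply (close_weaken _ _ _ _ _ _ (Rmin_r _ _) Hc). }
  specialize (Hg y Hy (close_weaken _ _ _ _ _ _ (Rmin_l _ _) Hc)). simpl in Hg.
  apply Rabs_def2 in A1. apply Rabs_def2 in Hg. lra.
Qed.

Lemma potential_max_NE xC xs : feasC n k Q xC -> box 0 m Q xs ->
  (forall y, box 0 m Q y -> potential xC y <= potential xC xs) -> NE n k Q H alpha h g xC xs.
Proof.
  intros HC Hxs Hmax.
  assert (HN : feasN n k Q xs) by (intros i Hi; apply Hxs; unfold m; lia).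
  split; auto. intros j Hj y Hy.
  assert (Hjn : (j < n)%nat) by (unfold m in *; lia). pose proof (Halpha j Hjn).
  rewrite payoff_deviation, payoff_noncoop by auto.
  assert (Hu : box 0 m Q (update xs j y)).
  { intros i Hi. unfold update. destruct (Nat.eqb_spec i j); auto. }
  specialize (Hmax _ Hu). unfold potential in Hmax.
  rewrite sumR_update in Hmax by auto.
  rewrite (sumR_ext m (fun i => / alpha i * g i (update xs j y i))
      (update (fun i => / alpha i * g i (xs i)) j (/ alpha j * g j y))) in Hmax
    by (intros i Hi; unfold update; destruct (Nat.eqb_spec i j) as [->|]; auto).
  rewrite sumR_update, <- aggregate_split in Hmax by auto.
  replace (sumR m xs - xs j + y + coop_total xC)
    with (aggregate xs xC - xs j + y) in Hmax by (rewrite aggregate_split; ring).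
  apply Rmult_le_reg_l with (/ alpha j); [apply Rinv_0_lt_compat; auto|].
  replace (/ alpha j * (alpha j * H (aggregate xs xC - xs j + y) - g j y))
    with (H (aggregate xs xC - xs j + y) - / alpha j * g j y) by (field; lra).
  replace (/ alpha j * (alpha j * H (aggregate xs xC) - g j (xs j)))
    with (H (aggregate xs xC) - / alpha j * g j (xs j)) by (field; lra).
  lra.
Qed.

Lemma NE_exists xC : feasC n k Q xC -> exists xN, NE n k Q H alpha h g xC xN.
Proof.
  intros HC.
  destruct (usc_attains_max 0 m Q (potential xC) _ ltac:(lra) (potential_bounded xC)
              (potential_usc xC)) as [xs [Hxs Hmax]].
  exists xs. apply potential_max_NE; auto.
Qed.

(** The set of equilibria is closed; an equilibrium of minimal aggregate exists. *)

(* Violating player j's first-order conditions is an open condition in the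
   aggregate and the own action, since dH and dg_j are continuous. *)
Lemma not_foc_open j S t : (j < n)%nat -> 0 <= t <= Q -> ~ foc j S t ->
  exists d, 0 < d /\ forall S' t', 0 <= t' <= Q -> Rabs (S' - S) < d -> Rabs (t' - t) < d ->
    ~ foc j S' t'.
Proof.
  intros Hj Ht Hnot. pose proof (Halpha j Hj) as Haj.
  set (gap := fun S t => dg j t - alpha j * dH S).
  assert (Hgap : forall eps, 0 < eps -> exists d, 0 < d /\ forall S' t', 0 <= t' <= Q ->
            Rabs (S' - S) < d -> Rabs (t' - t) < d -> Rabs (gap S' t' - gap S t) < eps).
  { intros eps He.
    destruct (Hdgc j Hj t Ht (eps / 2)) as [d1 [Hd1 Hg1]]; [lra|].
    destruct (continuity_pt_eps dH S (HdHc S) (eps / (2 * alpha j))) as [d2 [Hd2 Hg2]];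
      [apply Rdiv_lt_0_compat; lra|].
    exists (Rmin d1 d2). split; [apply Rmin_glb_lt; auto|]. intros S' t' Ht' HS Htt.
    specialize (Hg1 t' Ht' (Rlt_le_trans _ _ _ Htt (Rmin_l _ _))).
    specialize (Hg2 S' (Rlt_le_trans _ _ _ HS (Rmin_r _ _))).
    apply Rabs_def2 in Hg1. apply Rabs_def2 in Hg2. apply Rabs_def1; unfold gap.
    - assert (alpha j * (dH S - dH S') < alpha j * (eps / (2 * alpha j))) by (apply Rmult_lt_compat_l; lra).
      replace (alpha j * (eps / (2 * alpha j))) with (eps / 2) in * by (field; lra). lra.
    - assert (alpha j * (dH S' - dH S) < alpha j * (eps / (2 * alpha j))) by (apply Rmult_lt_compat_l; lra).
      replace (alpha j * (eps / (2 * alpha j))) with (eps / 2) in * by (field; lra). lra. }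
  assert (Hcase : (0 < t /\ 0 < gap S t) \/ (t < Q /\ gap S t < 0)).
  { unfold gap. apply NNPP. intro Hn. apply Hnot. split; auto. split; intros;
      apply Rnot_lt_le; intro; apply Hn; [left|right]; split; auto; lra. }
  destruct Hcase as [[Hpos Hg]|[HltQ Hg]].
  - destruct (Hgap (gap S t) Hg) as [d [Hd Hcl]].
    exists (Rmin d t). split; [apply Rmin_glb_lt; auto|].
    intros S' t' Ht' HS Htt [_ [Hfoc _]].
    pose proof (Hcl S' t' Ht' (Rlt_le_trans _ _ _ HS (Rmin_l _ _))
                  (Rlt_le_trans _ _ _ Htt (Rmin_l _ _))) as Hc.
    pose proof (Rlt_le_trans _ _ _ Htt (Rmin_r _ _)) as Ht't.
    apply Rabs_def2 in Hc. apply Rabs_def2 in Ht't. unfold gap in *.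
    specialize (Hfoc ltac:(lra)). lra.
  - destruct (Hgap (- gap S t) ltac:(lra)) as [d [Hd Hcl]].
    exists (Rmin d (Q - t)). split; [apply Rmin_glb_lt; lra|].
    intros S' t' Ht' HS Htt [_ [_ Hfoc]].
    pose proof (Hcl S' t' Ht' (Rlt_le_trans _ _ _ HS (Rmin_l _ _))
                  (Rlt_le_trans _ _ _ Htt (Rmin_l _ _))) as Hc.
    pose proof (Rlt_le_trans _ _ _ Htt (Rmin_r _ _)) as Ht't.
    apply Rabs_def2 in Hc. apply Rabs_def2 in Ht't. unfold gap in *.
    specialize (Hfoc ltac:(lra)). lra.
Qed.

Lemma not_NE_open xC x : feasC n k Q xC -> box 0 m Q x -> ~ NE n k Q H alpha h g xC x ->
  exists d, 0 < d /\ forall y, box 0 m Q y -> close 0 m d x y -> ~ NE n k Q H alpha h g xC y.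
Proof.
  intros HC Hx HnNE.
  assert (Hj : exists j, (j < m)%nat /\ ~ foc j (aggregate x xC) (x j)).
  { apply NNPP. intro Hno. apply HnNE. apply NE_iff; auto. split; [intros i Hi; apply Hx; unfold m; lia|].
    intros j Hj. apply NNPP. intro Hb. apply Hno. exists j. auto. }
  destruct Hj as [j [Hj Hnot]].
  destruct (not_foc_open j _ _ ltac:(unfold m in *; lia) (Hx j ltac:(lia)) Hnot) as [d [Hd Hopen]].
  destruct (div_succ_bounds d m Hd) as [[Hd' Hdd] _].
  exists (d / (INR m + 1)). split; auto. intros y Hy Hc HNE.
  apply NE_iff in HNE; auto. destruct HNE as [_ Hfoc].
  apply (Hopen (aggregate y xC) (y j)); [apply Hy; lia | | | apply Hfoc; auto].
  - rewrite !aggregate_split. replace (sumR m y + coop_total xC - (sumR m x + coop_total xC))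
      with (sumR m y - sumR m x) by ring. apply sumR_close; auto.
  - eapply Rlt_le_trans; [apply Hc; lia|exact Hdd].
Qed.

Definition NE_penalty (xC x : nat -> R) : R :=
  if excluded_middle_informative (NE n k Q H alpha h g xC x)
  then - sumR m x else - (INR m * Q + 1).

Lemma box_sum_bounds x : box 0 m Q x -> 0 <= sumR m x <= INR m * Q.
Proof. intros Hx. split; [apply sumR_ge0|apply sumR_bound]; intros; apply Hx; lia. Qed.

(* Upper semicontinuous because the equilibrium set is closed. *)
Lemma NE_penalty_usc xC : feasC n k Q xC -> usc_on_box 0 m Q (NE_penalty xC).
Proof.
  intros HC x Hx eps He. unfold NE_penalty at 2.
  destruct (excluded_middle_informative (NE n k Q H alpha h g xC x)) as [HN|HN].
  - destruct (div_succ_bounds eps m He) as [[Hd _] _].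
    exists (eps / (INR m + 1)). split; auto. intros y Hy Hc. unfold NE_penalty.
    destruct excluded_middle_informative.
    + pose proof (sumR_close m eps x y He Hc) as Hs. apply Rabs_def2 in Hs. lra.
    + pose proof (box_sum_bounds x Hx). lra.
  - destruct (not_NE_open xC x HC Hx HN) as [d [Hd Hopen]]. exists d. split; auto.
    intros y Hy Hc. unfold NE_penalty. destruct excluded_middle_informative as [HNy|];
      [exfalso; exact (Hopen y Hy Hc HNy)|lra].
Qed.

(* An equilibrium of minimal aggregate exists: it maximizes NE_penalty, as
   equilibria exist and score above the constant. *)
Lemma minimal_NE_exists xC : feasC n k Q xC -> exists xN, NE n k Q H alpha h g xC xN /\
  forall xN', NE n k Q H alpha h g xC xN' -> sumR m xN <= sumR m xN'.
Proof.
  intros HC.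
  destruct (usc_attains_max 0 m Q (NE_penalty xC) 0) as [xs [Hxs Hmax]];
    [lra| |apply NE_penalty_usc; auto|].
  { intros x Hx. unfold NE_penalty. destruct excluded_middle_informative;
      [pose proof (box_sum_bounds x Hx); lra|pose proof (pos_INR m); nra]. }
  destruct (NE_exists xC HC) as [xe Hxe].
  assert (Hxe' : box 0 m Q xe) by (intros i Hi; apply Hxe; unfold m in *; lia).
  assert (Hxs_NE : NE n k Q H alpha h g xC xs).
  { apply NNPP. intro Hn. specialize (Hmax xe Hxe'). pose proof (box_sum_bounds xe Hxe').
    unfold NE_penalty in Hmax.
    destruct excluded_middle_informative; [|tauto]. destruct excluded_middle_informative; [tauto|].
    lra. }
  exists xs. split; auto. intros xN' HN'.
  assert (Hb' : box 0 m Q xN') by (intros i Hi; apply HN'; unfold m in *; lia).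
  specialize (Hmax xN' Hb'). unfold NE_penalty in Hmax.
  destruct excluded_middle_informative; [|tauto]. destruct excluded_middle_informative; [|tauto].
  lra.
Qed.

(** * The cooperators' problem *)

Definition coop_weight : R := sumR n (fun i => if Nat.leb m i then alpha i else 0).
Definition coop_cost (xC : nat -> R) : R :=
  sumR n (fun i => if Nat.leb m i then g i (xC i) else 0).

Lemma coop_weight_pos : (1 <= k)%nat -> 0 < coop_weight.
Proof.
  intros Hk. unfold coop_weight. replace n with (S (n - 1)) at 1 by lia. simpl sumR.
  assert (0 <= sumR (n - 1) (fun i => if Nat.leb m i then alpha i else 0)).
  { apply sumR_ge0. intros i Hi. destruct (Nat.leb m i); [apply Rlt_le, Halpha; lia|lra]. }
  destruct (Nat.leb_spec m (n - 1)); [|unfold m in *; lia].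
  pose proof (Halpha (n - 1) ltac:(lia)). lra.
Qed.

(* The cooperators' joint payoff depends on the non-cooperators only through
   the aggregate, and increases with it. *)
Lemma coopSum_aggregate xN xC : feasN n k Q xN -> feasC n k Q xC ->
  coopSum n k H alpha h g xN xC = coop_weight * H (aggregate xN xC) - coop_cost xC.
Proof.
  intros HN HC. unfold coopSum, coop_weight, coop_cost.
  rewrite (sumR_ext n _ (fun i => H (aggregate xN xC) * (if Nat.leb m i then alpha i else 0) -
                                  (if Nat.leb m i then g i (xC i) else 0))).
  - rewrite sumR_minus, sumR_scal. ring.
  - intros i Hi. fold m. destruct (Nat.leb_spec m i); [|ring].
    unfold payoff. rewrite sum_h_aggregate by auto. unfold join.
    destruct (Nat.ltb_spec i (n - k)); [unfold m in *; lia|ring].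
Qed.

(* Hence an equilibrium of minimal aggregate is a worst equilibrium for the
   cooperators. *)
Lemma minimal_NE_argmin xC xN : feasC n k Q xC -> NE n k Q H alpha h g xC xN ->
  (forall xN', NE n k Q H alpha h g xC xN' -> sumR m xN <= sumR m xN') ->
  NE_argmin n k Q H alpha h g xC xN.
Proof.
  intros HC HNE Hmin. split; auto. intros xN' HNE'.
  rewrite !coopSum_aggregate by (apply HNE || apply HNE' || auto).
  rewrite !aggregate_split.
  assert (0 <= coop_weight).
  { apply sumR_ge0. intros i Hi. destruct (Nat.leb m i); [apply Rlt_le, Halpha; lia|lra]. }
  assert (H (sumR m xN + coop_total xC) <= H (sumR m xN' + coop_total xC))
    by (apply H_mono; specialize (Hmin xN' HNE'); lra).
  nra.
Qed.

(* Key estimate: when the cooperators raise their total by r >= 0, the minimal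
   equilibrium aggregate rises by at most r. Otherwise, interpolating between an
   equilibrium at the old profile and the minimal one at the new profile
   (foc_profile_with_sum) produces an equilibrium at the new profile with a
   smaller aggregate. *)
Lemma minimal_aggregate_bound xC xC' xN xN' : feasC n k Q xC -> feasC n k Q xC' ->
  NE n k Q H alpha h g xC xN -> NE n k Q H alpha h g xC' xN' ->
  (forall z, NE n k Q H alpha h g xC' z -> sumR m xN' <= sumR m z) ->
  aggregate xN' xC' <= aggregate xN xC + Rmax 0 (coop_total xC' - coop_total xC).
Proof.
  intros HC HC' HNE HNE' Hmin.
  set (S := aggregate xN xC). set (S' := aggregate xN' xC').
  set (S2 := S + Rmax 0 (coop_total xC' - coop_total xC)).
  apply Rnot_lt_le. intro Hlt.
  destruct (proj1 (NE_iff xC xN HC) HNE) as [HN Hfoc].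
  destruct (proj1 (NE_iff xC' xN' HC') HNE') as [HN' Hfoc'].
  pose proof (Rmax_l 0 (coop_total xC' - coop_total xC)).
  pose proof (Rmax_r 0 (coop_total xC' - coop_total xC)).
  assert (HS : S = sumR m xN + coop_total xC) by apply aggregate_split.
  assert (HS' : S' = sumR m xN' + coop_total xC') by apply aggregate_split.
  destruct (foc_profile_with_sum S S2 S' xN xN' (S2 - coop_total xC'))
    as [w [Hw Hsw]]; auto; try (unfold S2 in *; lra).
  assert (HNEw : NE n k Q H alpha h g xC' w).
  { apply NE_iff; auto. split; [intros i Hi; apply Hw; auto|].
    intros j Hj. replace (aggregate w xC') with S2; auto. rewrite aggregate_split. lra. }
  specialize (Hmin w HNEw). unfold S2 in *. lra.
Qed.

Lemma coop_total_close d x y : 0 < d -> close m n (d / (INR n + 1)) x y ->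
  Rabs (coop_total y - coop_total x) < d.
Proof.
  intros Hd Hc. apply sumR_close; auto. intros i Hi.
  destruct (Nat.leb_spec m i); [apply Hc; lia|].
  rewrite Rminus_diag, Rabs_R0. apply div_succ_bounds; auto.
Qed.

(* A selection of minimal equilibria defines the leader's value function
   tilde-pi; it is bounded above and upper semicontinuous. *)
Section Selection.
Variable sel : (nat -> R) -> nat -> R.
Hypothesis Hsel : forall xC, feasC n k Q xC -> NE n k Q H alpha h g xC (sel xC) /\
  forall xN', NE n k Q H alpha h g xC xN' -> sumR m (sel xC) <= sumR m xN'.
Hypothesis Hk1 : (1 <= k)%nat.

Definition leader_value (xC : nat -> R) : R := coopSum n k H alpha h g (sel xC) xC.

Lemma leader_value_eq xC : feasC n k Q xC ->
  leader_value xC = coop_weight * H (aggregate (sel xC) xC) - coop_cost xC.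
Proof. intros HC. apply coopSum_aggregate; auto. apply Hsel; auto. Qed.

Lemma leader_value_bounded xC : box m n Q xC ->
  leader_value xC <= coop_weight * H (INR n * Q)
                     - sumR n (fun i => if Nat.leb m i then g i 0 else 0).
Proof.
  intros Hx. apply box_feasC in Hx. rewrite leader_value_eq by auto.
  pose proof (coop_weight_pos Hk1).
  assert (H (aggregate (sel xC) xC) <= H (INR n * Q)).
  { apply H_mono, sumR_bound. intros. apply join_feasible; auto. apply Hsel; auto. }
  assert (sumR n (fun i => if Nat.leb m i then g i 0 else 0) <= coop_cost xC).
  { apply sumR_le. intros i Hi. destruct (Nat.leb_spec m i); [|lra].
    assert (0 <= xC i <= Q) by (apply Hx; unfold m in *; lia).
    destruct (Req_dec (xC i) 0) as [->|]; [lra|]. left; apply (Hginc i Hi); lra. }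
  nra.
Qed.

Lemma leader_value_usc : usc_on_box m n Q leader_value.
Proof.
  intros x Hx eps He. pose proof Hx as HxC. apply box_feasC in HxC.
  pose proof (coop_weight_pos Hk1) as HA.
  set (S := aggregate (sel x) x).
  destruct (H_continuous S (eps / (2 * coop_weight))) as [d1 [Hd1 HH]];
    [apply Rdiv_lt_0_compat; lra|].
  destruct (sumR_continuous m n Q g x) with (eps := eps / 2) as [d2 [Hd2 Hg]]; [|lra|].
  { intros i Hi. apply (derivative_continuous _ _ _ _ (dg i (x i))), Hdg; [lia|apply Hx; auto]. }
  destruct (div_succ_bounds d1 n Hd1) as [[Hd3 _] _].
  exists (Rmin d2 (d1 / (INR n + 1))). split; [apply Rmin_glb_lt; auto|].
  intros y Hy Hc. pose proof Hy as HyC. apply box_feasC in HyC.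
  rewrite !leader_value_eq by auto.
  set (r := Rmax 0 (coop_total y - coop_total x)).
  assert (Hr : 0 <= r < d1).
  { pose proof (coop_total_close d1 x y Hd1 (close_weaken _ _ _ _ _ _ (Rmin_r _ _) Hc)) as Ht.
    apply Rabs_def2 in Ht. unfold r, Rmax. destruct Rle_dec; lra. }
  assert (E1 : H (aggregate (sel y) y) <= H (S + r)).
  { apply H_mono, minimal_aggregate_bound; auto; apply Hsel; auto. }
  assert (E2 : Rabs (H (S + r) - H S) < eps / (2 * coop_weight)).
  { apply HH. replace (S + r - S) with r by ring. rewrite Rabs_right; lra. }
  assert (E3 : Rabs (coop_cost y - coop_cost x) < eps / 2)
    by (apply Hg; auto; apply (close_weaken _ _ _ _ _ _ (Rmin_l _ _) Hc)).
  apply Rabs_def2 in E2. apply Rabs_def2 in E3.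
  assert (coop_weight * H (aggregate (sel y) y) <= coop_weight * H S + eps / 2).
  { apply Rle_trans with (coop_weight * (H S + eps / (2 * coop_weight))).
    - apply Rmult_le_compat_l; lra.
    - right. field. lra. }
  fold S. unfold coop_cost in *. lra.
Qed.

End Selection.

Lemma PCLE_exists : (1 <= k)%nat -> exists xN xC, PCLE n k Q H alpha h g xN xC.
Proof.
  intros Hk1.
  assert (Hch : forall xC, exists xN, feasC n k Q xC -> NE n k Q H alpha h g xC xN /\
            forall xN', NE n k Q H alpha h g xC xN' -> sumR m xN <= sumR m xN').
  { intros xC. destruct (excluded_middle_informative (feasC n k Q xC)) as [HC|HC].
    - destruct (minimal_NE_exists xC HC) as [xN HxN]. exists xN. auto.
    - exists (fun _ => 0). tauto. }
  destruct (functional_choice _ Hch) as [sel Hsel].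
  destruct (usc_attains_max m n Q (leader_value sel) _ ltac:(lra)
              (leader_value_bounded sel Hsel Hk1) (leader_value_usc sel Hsel Hk1))
    as [xs [Hxs Hmax]].
  apply box_feasC in Hxs.
  exists (sel xs), xs. split; [auto|split].
  - apply minimal_NE_argmin; auto; apply Hsel; auto.
  - intros xC' HC'. exists (sel xC'). split.
    + apply minimal_NE_argmin; auto; apply Hsel; auto.
    + apply (Hmax xC'). apply box_feasC; auto.
Qed.

End Game.

Lemma weights_positive n (alpha : nat -> R) : 0 < alpha 0%nat ->
  (forall i, (S i < n)%nat -> alpha i <= alpha (S i)) -> forall i, (i < n)%nat -> 0 < alpha i.
Proof.
  intros H0 Hmono i. induction i as [|i IH]; intros Hi; auto.
  specialize (Hmono i Hi). specialize (IH ltac:(lia)). lra.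
Qed.

Lemma C1_on_derivatives n Q (g : nat -> R -> R) :
  (forall i, (i < n)%nat -> C1_on (g i) 0 Q) ->
  exists dg : nat -> R -> R, forall i, (i < n)%nat ->
    (forall x, 0 <= x <= Q -> has_derivative_within (g i) 0 Q x (dg i x)) /\
    (forall x, 0 <= x <= Q -> continuous_within (dg i) 0 Q x).
Proof.
  intros Hg.
  assert (Hch : forall i, exists df : R -> R, (i < n)%nat ->
    (forall x, 0 <= x <= Q -> has_derivative_within (g i) 0 Q x (df x)) /\
    (forall x, 0 <= x <= Q -> continuous_within df 0 Q x)).
  { intros i. destruct (excluded_middle_informative (i < n)%nat) as [Hi|Hi].
    - destruct (Hg i Hi) as [df Hdf]. exists df. auto.
    - exists (fun _ => 0). tauto. }
  destruct (functional_choice _ Hch) as [dg Hdg]. exists dg. exact Hdg.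
Qed.

Theorem proposition6 (n : nat) (Qbar : R) (H : R -> R) (alpha : nat -> R)
  (h g : nat -> R -> R) (k : nat) :
  (2 <= n)%nat ->
  0 < Qbar ->
  0 < alpha 0%nat ->
  (forall i, (S i < n)%nat -> alpha i <= alpha (S i)) ->
  regular n Qbar H h g ->
  (2 <= k <= n)%nat ->
  exists xN xC, PCLE n k Qbar H alpha h g xN xC.
Proof.
  intros Hn HQ Ha0 Hmono Hreg Hk.
  destruct Hreg as [Hh [[dH [HdH HdHc]] [HHinc [HHconc Hg]]]].
  destruct (C1_on_derivatives n Qbar g (fun i Hi => proj1 (Hg i Hi))) as [dg Hdg].
  apply (PCLE_exists n k Qbar H alpha h g dH dg); auto; try lia.
  - apply weights_positive; auto.
  - intros i Hi. apply (Hdg i Hi).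
  - intros i Hi. apply (Hdg i Hi).
  - intros i Hi. apply (Hg i Hi).
  - intros i Hi. apply (Hg i Hi).
Qed.
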